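(* Let $(X_1,d_1)$, $(X_2,d_2)$ be proper CAT(0) spaces, let $\Gamma$ be an infinite group acting convex co-compactly by isometries on $X_1$ and on $X_2$ via homomorphisms $\rho_i:\Gamma\to\mathrm{Isom}(X_i)$, and suppose the diagonal action $\rho=(\rho_1,\rho_2)$ of $\Gamma$ on $X_1\times X_2$ is convex co-compact, with $C\subset X_1\times X_2$ a nonempty $\rho(\Gamma)$-invariant convex subset such that $C/\rho(\Gamma)$ is compact. Fix $x=(x_1,x_2)\in C$, and for $i=1,2$ let $l_i$ be a complete geodesic line in $X_i$ through $x_i$. Let $F=l_1\times l_2$ (a flat isometric to the Euclidean plane) and $C_F=F\cap C$. If $C_F$ has infinite diameter, then $C_F$ lies within finite Hausdorff distance of a geodesic ray or of a complete geodesic line in $F$.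
   Context: $X_1\times X_2$ carries the product metric $\sqrt{d_1^2+d_2^2}$. A properly discontinuous isometric action on a proper CAT(0) space $X$ is convex co-compact if there is a nonempty closed invariant convex subset with compact quotient. *)

From Stdlib Require Import Reals List.
Open Scope R_scope.

Section Metric.
Context {X : Type} (d : X -> X -> R).

Definition is_metric : Prop :=
  (forall x y, 0 <= d x y) /\ (forall x y, d x y = 0 <-> x = y) /\
  (forall x y, d x y = d y x) /\ (forall x y z, d x z <= d x y + d y z).

Definition geodesic_segment (g : R -> X) (x y : X) : Prop :=
  g 0 = x /\ g (d x y) = y /\
  forall s t, 0 <= s <= d x y -> 0 <= t <= d x y -> d (g s) (g t) = Rabs (s - t).

Definition geodesic_space : Prop := forall x y, exists g, geodesic_segment g x y.

Definition geodesic_line (l : R -> X) : Prop :=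
  forall s t, d (l s) (l t) = Rabs (s - t).

Definition geodesic_ray (r : R -> X) : Prop :=
  forall s t, 0 <= s -> 0 <= t -> d (r s) (r t) = Rabs (s - t).

Definition open_set (U : X -> Prop) : Prop :=
  forall x, U x -> exists e, 0 < e /\ forall y, d x y < e -> U y.

Definition closed_set (C : X -> Prop) : Prop := open_set (fun x => ~ C x).

Definition compact_set (K : X -> Prop) : Prop :=
  forall (I : Type) (U : I -> X -> Prop),
    (forall i, open_set (U i)) -> (forall x, K x -> exists i, U i x) ->
    exists l : list I, forall x, K x -> exists i, In i l /\ U i x.

Definition proper_space : Prop :=
  forall x r, compact_set (fun y => d x y <= r).

Definition convex_set (C : X -> Prop) : Prop :=
  forall x y g, C x -> C y -> geodesic_segment g x y ->
    forall t, 0 <= t <= d x y -> C (g t).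

Definition rel_open (C V : X -> Prop) : Prop :=
  exists W, open_set W /\ forall x, C x -> (V x <-> W x).

Definition unbounded (A : X -> Prop) : Prop :=
  forall M, exists p q, A p /\ A q /\ M < d p q.

Definition hausdorff_finite (A B : X -> Prop) : Prop :=
  exists D, (forall a, A a -> exists b, B b /\ d a b <= D) /\
            (forall b, B b -> exists a, A a /\ d a b <= D).
End Metric.

Definition eucl2 (p q : R * R) : R :=
  sqrt ((fst p - fst q) ^ 2 + (snd p - snd q) ^ 2).

(* p lies on the side g from a to b, and pbar is its comparison point on the
   segment [a', b'] of the comparison triangle *)
Definition on_side {X} (d : X -> X -> R) (g : R -> X) (a b : X) (a' b' : R * R)
  (p : X) (pbar : R * R) : Prop :=
  exists t, 0 <= t <= d a b /\ p = g t /\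
    pbar = (fst a' + t / d a b * (fst b' - fst a'),
            snd a' + t / d a b * (snd b' - snd a')).

Definition CAT0 {X} (d : X -> X -> R) : Prop :=
  is_metric d /\ geodesic_space d /\
  forall (x y z : X) (g1 g2 g3 : R -> X),
    geodesic_segment d g1 x y -> geodesic_segment d g2 y z ->
    geodesic_segment d g3 z x ->
    forall x' y' z' : R * R,
      eucl2 x' y' = d x y -> eucl2 y' z' = d y z -> eucl2 z' x' = d z x ->
      let in_tri p pb := on_side d g1 x y x' y' p pb \/
                         on_side d g2 y z y' z' p pb \/
                         on_side d g3 z x z' x' p pb in
      forall p pb q qb, in_tri p pb -> in_tri q qb -> d p q <= eucl2 pb qb.

Definition prod_dist {X1 X2} (d1 : X1 -> X1 -> R) (d2 : X2 -> X2 -> R)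
  (p q : X1 * X2) : R :=
  sqrt (d1 (fst p) (fst q) ^ 2 + d2 (snd p) (snd q) ^ 2).

Definition is_group {G} (mul : G -> G -> G) (one : G) (inv : G -> G) : Prop :=
  (forall a b c, mul a (mul b c) = mul (mul a b) c) /\
  (forall a, mul one a = a) /\ (forall a, mul a one = a) /\
  (forall a, mul (inv a) a = one) /\ (forall a, mul a (inv a) = one).

Definition finite_set {G} (S : G -> Prop) : Prop :=
  exists l : list G, forall g, S g -> In g l.

Definition isometric_action {G X} (d : X -> X -> R) (mul : G -> G -> G) (one : G)
  (rho : G -> X -> X) : Prop :=
  (forall g x y, d (rho g x) (rho g y) = d x y) /\
  (forall g y, exists x, rho g x = y) /\
  (forall x, rho one x = x) /\
  (forall g h x, rho (mul g h) x = rho g (rho h x)).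

Definition diag_action {G X1 X2} (rho1 : G -> X1 -> X1) (rho2 : G -> X2 -> X2)
  (g : G) (p : X1 * X2) : X1 * X2 := (rho1 g (fst p), rho2 g (snd p)).

Definition properly_discontinuous {G X} (d : X -> X -> R) (rho : G -> X -> X) : Prop :=
  forall K, compact_set d K ->
    finite_set (fun g => exists x, K x /\ K (rho g (x))).

Definition invariant_set {G X} (rho : G -> X -> X) (C : X -> Prop) : Prop :=
  forall g x, C x -> C (rho g x).

(* C / rho(G) is compact in the quotient topology: open sets of C/G correspond
   to G-invariant relatively open subsets of C. *)
Definition quotient_compact {G X} (d : X -> X -> R) (rho : G -> X -> X)
  (C : X -> Prop) : Prop :=
  forall (I : Type) (U : I -> X -> Prop),
    (forall i, rel_open d C (U i)) ->
    (forall i g x, C x -> U i x -> U i (rho g x)) ->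
    (forall x, C x -> exists i, U i x) ->
    exists l : list I, forall x, C x -> exists i, In i l /\ U i x.

Definition cocompact_convex_set {G X} (d : X -> X -> R) (rho : G -> X -> X)
  (C : X -> Prop) : Prop :=
  (exists x, C x) /\ closed_set d C /\ convex_set d C /\ invariant_set rho C /\
  quotient_compact d rho C.

Definition convex_cocompact {G X} (d : X -> X -> R) (rho : G -> X -> X) : Prop :=
  properly_discontinuous d rho /\ exists C, cocompact_convex_set d rho C.

From Stdlib Require Import Reals List Lra Classical.
Open Scope R_scope.

(* Parametrizing the flat F by (s, t) |-> (l1 s, l2 t) is an isometry from the
   Euclidean plane, so C_F corresponds to a convex planar set S.  Cocompactness
   of the diagonal action keeps C within bounded distance of the orbit of x, and
   proper discontinuity of each factor action then bounds the fibres of C over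
   X1 and over X2; hence the vertical and horizontal sections of S are bounded.
   Up to a symmetry of the plane, the unbounded set S then extends to s = +oo,
   and the slopes of its chords from a base point converge: S lies in a strip
   of bounded width around a line, along a half-line or along the whole line. *)

Lemma Rabs_sub_le a b : Rabs (a - b) <= Rabs a + Rabs b.
Proof. unfold Rminus. rewrite <- (Rabs_Ropp b). apply Rabs_triang. Qed.

Lemma eucl2_sqr s1 t1 s2 t2 :
  eucl2 (s1, t1) (s2, t2) * eucl2 (s1, t1) (s2, t2) = (s1 - s2) ^ 2 + (t1 - t2) ^ 2.
Proof.
  apply sqrt_sqrt. pose proof (pow2_ge_0 (s1 - s2)). pose proof (pow2_ge_0 (t1 - t2)). lra.
Qed.

Lemma eucl2_vertical s t t' : eucl2 (s, t) (s, t') = Rabs (t - t').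
Proof.
  unfold eucl2; cbn [fst snd].
  replace ((s - s) ^ 2 + (t - t') ^ 2) with (Rabs (t - t') ^ 2) by (rewrite pow2_abs; ring).
  apply sqrt_pow2, Rabs_pos.
Qed.

Lemma eucl2_le_sum s t s' t' : eucl2 (s, t) (s', t') <= Rabs (s - s') + Rabs (t - t').
Proof.
  pose proof (Rabs_pos (s - s')); pose proof (Rabs_pos (t - t')).
  unfold eucl2; cbn [fst snd].
  rewrite <- (sqrt_pow2 (Rabs (s - s') + Rabs (t - t'))) by lra.
  apply sqrt_le_1_alt. rewrite <- (pow2_abs (s - s')), <- (pow2_abs (t - t')). nra.
Qed.

(* Unit-speed parametrization of the line t = b + m s, at abscissa x0 for time 0. *)
Definition graph_path (b m x0 t : R) : R * R :=
  let x := x0 + t / sqrt (1 + m ^ 2) in (x, b + m * x).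

Lemma graph_path_line b m x0 : geodesic_line eucl2 (graph_path b m x0).
Proof.
  intros u v. unfold graph_path, eucl2; cbn [fst snd].
  set (k := sqrt (1 + m ^ 2)).
  assert (Hk : 0 < k) by (apply sqrt_lt_R0; nra).
  assert (Hk2 : k * k = 1 + m ^ 2) by (apply sqrt_sqrt; nra).
  replace (_ + _) with ((u - v) ^ 2).
  - rewrite <- Rsqr_pow2. apply sqrt_Rsqr_abs.
  - transitivity ((u - v) ^ 2 * (1 + m ^ 2) / (k * k)).
    + rewrite Hk2. field. nra.
    + field. lra.
Qed.

Lemma graph_path_at b m x0 x :
  graph_path b m x0 ((x - x0) * sqrt (1 + m ^ 2)) = (x, b + m * x).
Proof.
  assert (Hk : 0 < sqrt (1 + m ^ 2)) by (apply sqrt_lt_R0; nra).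
  unfold graph_path. replace (x0 + _ / _) with x by (field; lra). reflexivity.
Qed.

Definition convex2 (S : R * R -> Prop) : Prop :=
  forall s1 t1 s2 t2 l, S (s1, t1) -> S (s2, t2) -> 0 <= l <= 1 ->
    S (s1 + l * (s2 - s1), t1 + l * (t2 - t1)).

Definition unbounded_right (S : R * R -> Prop) : Prop :=
  forall M, exists s t, S (s, t) /\ M < s.

Definition near_ray_or_line {X} (d : X -> X -> R) (M A : X -> Prop) : Prop :=
  (exists r, geodesic_ray d r /\ (forall t, 0 <= t -> M (r t)) /\
     hausdorff_finite d A (fun p => exists t, 0 <= t /\ p = r t))
  \/
  (exists l, geodesic_line d l /\ (forall t, M (l t)) /\
     hausdorff_finite d A (fun p => exists t, p = l t)).

Section IsometricImage.
Context {X Y : Type} (d : X -> X -> R) (e : Y -> Y -> R) (f : X -> Y).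
Hypothesis f_isometric : forall p q, e (f p) (f q) = d p q.

Lemma geodesic_ray_comp r : geodesic_ray d r -> geodesic_ray e (fun t => f (r t)).
Proof. intros Hr s t Hs Ht. rewrite f_isometric. auto. Qed.

Lemma geodesic_line_comp l : geodesic_line d l -> geodesic_line e (fun t => f (l t)).
Proof. intros Hl s t. rewrite f_isometric. auto. Qed.

Lemma geodesic_segment_comp g x y :
  geodesic_segment d g x y -> geodesic_segment e (fun t => f (g t)) (f x) (f y).
Proof.
  intros (Hx & Hy & Hg). unfold geodesic_segment. rewrite f_isometric.
  split; [congruence | split; [congruence|]].
  intros s t Hs Ht. rewrite f_isometric. auto.
Qed.

Lemma hausdorff_finite_image (A B : X -> Prop) (A' B' : Y -> Prop) :
  (forall y, A' y <-> exists x, A x /\ y = f x) ->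
  (forall y, B' y <-> exists x, B x /\ y = f x) ->
  hausdorff_finite d A B -> hausdorff_finite e A' B'.
Proof.
  intros HA HB [D [HAB HBA]]. exists D. split.
  - intros y Hy. apply HA in Hy as [x [Hx ->]].
    destruct (HAB x Hx) as [z [Hz Hxz]].
    exists (f z). rewrite f_isometric, HB. eauto.
  - intros y Hy. apply HB in Hy as [x [Hx ->]].
    destruct (HBA x Hx) as [z [Hz Hxz]].
    exists (f z). rewrite f_isometric, HA. eauto.
Qed.

Lemma near_ray_or_line_image (M A : X -> Prop) (M' A' : Y -> Prop) :
  (forall x, M x -> M' (f x)) -> (forall y, A' y <-> exists x, A x /\ y = f x) ->
  near_ray_or_line d M A -> near_ray_or_line e M' A'.
Proof.
  intros HM HA [(r & Hr & HrM & Hrd) | (l & Hl & HlM & Hld)].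
  - left. exists (fun t => f (r t)). split; [now apply geodesic_ray_comp|].
    split; [auto|].
    apply (hausdorff_finite_image _ _ _ _ HA) with (2 := Hrd).
    intros y. split; [intros (t & Ht & ->) | intros (x & (t & Ht & ->) & ->)]; eauto.
  - right. exists (fun t => f (l t)). split; [now apply geodesic_line_comp|].
    split; [auto|].
    apply (hausdorff_finite_image _ _ _ _ HA) with (2 := Hld).
    intros y. split; [intros (t & ->) | intros (x & (t & ->) & ->)]; eauto.
Qed.

End IsometricImage.

Section ConvexPlaneSet.

Variable S : R * R -> Prop.
Hypothesis S_convex : convex2 S.

Lemma convex2_abscissa_interval s1 t1 s2 t2 s :
  S (s1, t1) -> S (s2, t2) -> s1 <= s <= s2 -> exists t, S (s, t).
Proof.
  intros H1 H2 Hs.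
  destruct (Req_dec s1 s2) as [<-|Hne].
  - replace s with s1 by lra. eauto.
  - set (l := (s - s1) / (s2 - s1)).
    assert (Hl : l * (s2 - s1) = s - s1) by (unfold l; field; lra).
    exists (t1 + l * (t2 - t1)). replace s with (s1 + l * (s2 - s1)) at 1 by lra.
    apply S_convex; auto. split; nra.
Qed.

Lemma near_ray_or_line_of_strip b m E :
  (forall s t, S (s, t) -> - E <= t - (b + m * s) <= E) ->
  unbounded_right S -> near_ray_or_line eucl2 (fun _ => True) S.
Proof.
  intros Hstrip Hright.
  set (k := sqrt (1 + m ^ 2)).
  assert (Hk : 0 < k) by (apply sqrt_lt_R0; nra).
  assert (Hclose : forall s t, S (s, t) -> eucl2 (s, t) (s, b + m * s) <= E).
  { intros s t Hst. rewrite eucl2_vertical. apply Rabs_le. auto. }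
  destruct (classic (forall M, exists s t, S (s, t) /\ s < M)) as [Hleft|Hleft].
  - right. exists (graph_path b m 0). split; [apply graph_path_line|split; [auto|]].
    exists E. split.
    + intros [s t] Hst. exists (s, b + m * s). split; [|auto].
      exists ((s - 0) * k). symmetry. apply graph_path_at.
    + intros p [u ->]. set (x := 0 + u / k).
      destruct (Hleft x) as [s1 [t1 [H1 Hx1]]].
      destruct (Hright x) as [s2 [t2 [H2 Hx2]]].
      destruct (convex2_abscissa_interval s1 t1 s2 t2 x) as [t Ht]; auto; [lra|].
      exists (x, t). split; auto.
  - apply not_all_ex_not in Hleft as [B HB].
    assert (HBs : forall s t, S (s, t) -> B <= s).
    { intros s t Hst. apply Rnot_lt_le. intros Hlt. apply HB. eauto. }
    destruct (Hright B) as [s1 [t1 [H1 _]]].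
    left. exists (graph_path b m B).
    split; [intros u v _ _; apply graph_path_line|split; [auto|]].
    exists (E + (1 + Rabs m) * (s1 - B)). split.
    + intros [s t] Hst. exists (s, b + m * s). split.
      * exists ((s - B) * k). split.
        -- pose proof (HBs s t Hst). apply Rmult_le_pos; lra.
        -- symmetry. apply graph_path_at.
      * pose proof (HBs s1 t1 H1). pose proof (Rabs_pos m).
        pose proof (Hclose s t Hst). nra.
    + intros p [u [Hu ->]]. set (x := B + u / k).
      assert (HBx : B <= x).
      { unfold x. assert (0 <= u / k); [|lra].
        apply Rmult_le_pos; [lra|left; apply Rinv_0_lt_compat; lra]. }
      set (x' := Rmax x s1).
      assert (Hxx : 0 <= x' - x <= s1 - B).
      { unfold x', Rmax. pose proof (HBs s1 t1 H1). destruct (Rle_dec x s1); lra. }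
      destruct (Hright x') as [s2 [t2 [H2 Hx2]]].
      destruct (convex2_abscissa_interval s1 t1 s2 t2 x') as [t' Ht']; auto.
      { split; [apply Rmax_r|lra]. }
      exists (x', t'). split; auto.
      unfold graph_path; fold k; fold x.
      eapply Rle_trans; [apply eucl2_le_sum|].
      rewrite (Rabs_right (x' - x)) by lra.
      assert (Rabs (t' - (b + m * x)) <= E + Rabs m * (x' - x)).
      { apply Rabs_le. pose proof (Hstrip x' t' Ht').
        pose proof (Rle_abs m). pose proof (Rle_abs (- m)). rewrite Rabs_Ropp in *. nra. }
      pose proof (Rabs_pos m). nra.
Qed.

Variable D : R.
Hypothesis S_vsection : forall s t t', S (s, t) -> S (s, t') -> t - t' <= D.

Lemma section_near_chord s1 t1 s2 t2 s t :
  S (s1, t1) -> S (s2, t2) -> S (s, t) -> s1 <= s <= s2 -> s1 < s2 ->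
  - D <= t - (t1 + (s - s1) / (s2 - s1) * (t2 - t1)) <= D.
Proof.
  intros H1 H2 H Hs Hlt.
  set (l := (s - s1) / (s2 - s1)).
  assert (Hl : l * (s2 - s1) = s - s1) by (unfold l; field; lra).
  assert (Hc : S (s, t1 + l * (t2 - t1))).
  { replace s with (s1 + l * (s2 - s1)) at 1 by lra. apply S_convex; auto. split; nra. }
  pose proof (S_vsection _ _ _ H Hc). pose proof (S_vsection _ _ _ Hc H). lra.
Qed.

Lemma asymptotic_slope a ya : S (a, ya) -> unbounded_right S ->
  exists m, forall s t, S (s, t) -> - (4 * D) <= t - ya - m * (s - a) <= 4 * D.
Proof.
  intros Ha Hright.
  assert (HD : 0 <= D) by (pose proof (S_vsection _ _ _ Ha Ha); lra).
  (* Up to the section width, [lower s t] and [upper s t] bound the slope of the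
     chord from (a, ya) to (s, t); every lower bound lies below every upper bound,
     and m is their supremum. *)
  set (lower := fun s t => (t - ya - D) / (s - a)).
  set (upper := fun s t => (t - ya + D) / (s - a)).
  assert (Hcross : forall s t s' t', S (s, t) -> S (s', t') -> a < s -> a < s' ->
                     lower s' t' <= upper s t).
  { intros s t s' t' H H' Hs Hs'.
    assert (Hkey : (t' - ya - D) * (s - a) <= (t - ya + D) * (s' - a)).
    { destruct (Rle_dec s s') as [Hle|Hle].
      - pose proof (section_near_chord a ya s' t' s t Ha H' H ltac:(lra) Hs') as Hc.
        set (l := (s - a) / (s' - a)) in Hc.
        assert (l * (s' - a) = s - a) by (unfold l; field; lra). nra.
      - pose proof (section_near_chord a ya s t s' t' Ha H H' ltac:(lra) Hs) as Hc.
        set (l := (s' - a) / (s - a)) in Hc.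
        assert (l * (s - a) = s' - a) by (unfold l; field; lra). nra. }
    unfold lower, upper.
    replace ((t' - ya - D) / (s' - a))
      with ((t' - ya - D) * (s - a) * (/ (s - a) * / (s' - a))) by (field; lra).
    replace ((t - ya + D) / (s - a))
      with ((t - ya + D) * (s' - a) * (/ (s - a) * / (s' - a))) by (field; lra).
    apply Rmult_le_compat_r; [|exact Hkey].
    apply Rmult_le_pos; left; apply Rinv_0_lt_compat; lra. }
  destruct (Hright a) as [s0 [t0 [H0 Hs0]]].
  destruct (completeness (fun z => exists s t, S (s, t) /\ a < s /\ z = lower s t))
    as [m [Hub Hlub]].
  { exists (upper s0 t0). intros z (s & t & H & Hs & ->). auto. }
  { exists (lower s0 t0). eauto. }
  assert (Hr : forall s t, S (s, t) -> a < s -> - D <= t - ya - m * (s - a) <= D).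
  { intros s t H Hs.
    assert (lower s t <= m) by (apply Hub; eauto).
    assert (m <= upper s t).
    { apply Hlub. intros z (s' & t' & H' & Hs' & ->). auto. }
    assert (t - ya - D = lower s t * (s - a)) by (unfold lower; field; lra).
    assert (t - ya + D = upper s t * (s - a)) by (unfold upper; field; lra).
    nra. }
  exists m. intros s t H.
  destruct (Rlt_le_dec a s) as [Hs|Hs].
  { pose proof (Hr s t H Hs). lra. }
  (* The chord from (s, t) to a point beyond abscissa 2a - s passes over a at
     most halfway along, so the deviation at s is at most twice that at a. *)
  destruct (Hright (2 * a - s)) as [s2 [t2 [H2 Hs2]]].
  pose proof (Hr s2 t2 H2 ltac:(lra)).
  pose proof (section_near_chord s t s2 t2 a ya H H2 Ha ltac:(lra) ltac:(lra)) as Hc.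
  set (l := (a - s) / (s2 - s)) in Hc.
  assert (Hl : l * (s2 - s) = a - s) by (unfold l; field; lra).
  assert (0 <= l <= 1 / 2) by (split; nra).
  nra.
Qed.

Lemma near_ray_or_line_of_unbounded_right :
  unbounded_right S -> near_ray_or_line eucl2 (fun _ => True) S.
Proof.
  intros Hright. destruct (Hright 0) as (a & ya & Ha & _).
  destruct (asymptotic_slope a ya Ha Hright) as [m Hm].
  apply (near_ray_or_line_of_strip (ya - m * a) m (4 * D)); auto.
  intros s t Hst. specialize (Hm s t Hst). lra.
Qed.

End ConvexPlaneSet.

Lemma near_ray_or_line_involution (f : R * R -> R * R) (S : R * R -> Prop) :
  (forall p q, eucl2 (f p) (f q) = eucl2 p q) -> (forall p, f (f p) = p) ->
  near_ray_or_line eucl2 (fun _ => True) (fun p => S (f p)) ->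
  near_ray_or_line eucl2 (fun _ => True) S.
Proof.
  intros Hiso Hinv. apply near_ray_or_line_image with (f := f) (M := fun _ => True); auto.
  intros y. split.
  - intros Hy. exists (f y). rewrite Hinv. auto.
  - intros (x & Hx & ->). exact Hx.
Qed.

Definition reflect_s (p : R * R) : R * R := (- fst p, snd p).
Definition swap_st (p : R * R) : R * R := (snd p, fst p).

Lemma reflect_s_isometric p q : eucl2 (reflect_s p) (reflect_s q) = eucl2 p q.
Proof. unfold eucl2, reflect_s; cbn. f_equal. ring. Qed.

Lemma swap_st_isometric p q : eucl2 (swap_st p) (swap_st q) = eucl2 p q.
Proof. unfold eucl2, swap_st; cbn. f_equal. ring. Qed.

Lemma reflect_sK p : reflect_s (reflect_s p) = p.
Proof. destruct p. unfold reflect_s; cbn. now rewrite Ropp_involutive. Qed.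

Lemma swap_stK p : swap_st (swap_st p) = p.
Proof. now destruct p. Qed.

Lemma near_ray_or_line_of_unbounded_abscissa S D : convex2 S ->
  (forall s t t', S (s, t) -> S (s, t') -> t - t' <= D) ->
  (forall M, exists s t, S (s, t) /\ M < Rabs s) ->
  near_ray_or_line eucl2 (fun _ => True) S.
Proof.
  intros Hconv Hsec Hunb.
  destruct (classic (unbounded_right S)) as [Hright|Hright].
  { exact (near_ray_or_line_of_unbounded_right S Hconv D Hsec Hright). }
  apply not_all_ex_not in Hright as [B HB].
  apply (near_ray_or_line_involution reflect_s);
    [apply reflect_s_isometric | apply reflect_sK |].
  apply (near_ray_or_line_of_unbounded_right _) with (D := D); unfold reflect_s.
  - intros s1 t1 s2 t2 l H1 H2 Hl; cbn in *.
    replace (- (s1 + l * (s2 - s1))) with (- s1 + l * (- s2 - - s1)) by ring.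
    apply Hconv; auto.
  - intros s t t'; cbn. apply Hsec.
  - intros M. destruct (Hunb (Rmax M B)) as (s & t & H & Hs).
    exists (- s), t. cbn. rewrite Ropp_involutive. split; [exact H|].
    assert (s <= B) by (apply Rnot_lt_le; intros Hlt; apply HB; eauto).
    pose proof (Rmax_l M B). pose proof (Rmax_r M B).
    destruct (Rle_dec 0 s); [rewrite Rabs_right in Hs | rewrite Rabs_left in Hs]; lra.
Qed.

Lemma near_ray_or_line_of_convex2 S D1 D2 : convex2 S ->
  (forall s t t', S (s, t) -> S (s, t') -> t - t' <= D1) ->
  (forall s s' t, S (s, t) -> S (s', t) -> s - s' <= D2) ->
  unbounded eucl2 S -> near_ray_or_line eucl2 (fun _ => True) S.
Proof.
  intros Hconv Hv Hh Hunb.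
  destruct (classic (forall M, exists s t, S (s, t) /\ M < Rabs s)) as [Hs|Hs].
  { exact (near_ray_or_line_of_unbounded_abscissa S D1 Hconv Hv Hs). }
  destruct (classic (forall M, exists s t, S (s, t) /\ M < Rabs t)) as [Ht|Ht].
  { apply (near_ray_or_line_involution swap_st);
      [apply swap_st_isometric | apply swap_stK |].
    apply (near_ray_or_line_of_unbounded_abscissa _ D2); unfold swap_st.
    - intros s1 t1 s2 t2 l H1 H2 Hl; cbn in *. apply Hconv; auto.
    - intros s t t'; cbn. apply Hh.
    - intros M. destruct (Ht M) as (s & t & H & Hlt). eauto. }
  apply not_all_ex_not in Hs as [A HA]. apply not_all_ex_not in Ht as [B HB].
  assert (HsA : forall s t, S (s, t) -> Rabs s <= A).
  { intros s t H. apply Rnot_lt_le. intros Hlt. apply HA. eauto. }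
  assert (HtB : forall s t, S (s, t) -> Rabs t <= B).
  { intros s t H. apply Rnot_lt_le. intros Hlt. apply HB. eauto. }
  exfalso. destruct (Hunb (2 * A + 2 * B)) as ([s t] & [s' t'] & H & H' & Hlt).
  pose proof (eucl2_le_sum s t s' t').
  pose proof (Rabs_sub_le s s'). pose proof (Rabs_sub_le t t').
  pose proof (HsA _ _ H). pose proof (HsA _ _ H').
  pose proof (HtB _ _ H). pose proof (HtB _ _ H'). lra.
Qed.

Lemma plane_segment_geodesic s1 t1 s2 t2 : eucl2 (s1, t1) (s2, t2) <> 0 ->
  geodesic_segment eucl2
    (fun u => let l := u / eucl2 (s1, t1) (s2, t2) in
              (s1 + l * (s2 - s1), t1 + l * (t2 - t1)))
    (s1, t1) (s2, t2).
Proof.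
  set (L := eucl2 (s1, t1) (s2, t2)). intros HL0.
  assert (HL2 : L * L = (s1 - s2) ^ 2 + (t1 - t2) ^ 2) by apply eucl2_sqr.
  split; [|split].
  - cbv beta zeta. f_equal; unfold Rdiv; ring.
  - cbv beta zeta. fold L. f_equal; field; auto.
  - intros u v _ _. unfold eucl2 at 1; cbn [fst snd].
    replace (_ + _) with ((u - v) ^ 2).
    + rewrite <- Rsqr_pow2. apply sqrt_Rsqr_abs.
    + transitivity ((u - v) ^ 2 * ((s1 - s2) ^ 2 + (t1 - t2) ^ 2) / (L * L)).
      * rewrite HL2. field. nra.
      * field. auto.
Qed.

Lemma convex2_preimage {Y} (e : Y -> Y -> R) (f : R * R -> Y) (C : Y -> Prop) :
  (forall p q, e (f p) (f q) = eucl2 p q) -> convex_set e C -> convex2 (fun p => C (f p)).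
Proof.
  intros Hf Hconv s1 t1 s2 t2 l H1 H2 Hl.
  set (L := eucl2 (s1, t1) (s2, t2)).
  assert (HL0 : 0 <= L) by apply sqrt_pos.
  assert (HL2 : L * L = (s1 - s2) ^ 2 + (t1 - t2) ^ 2) by apply eucl2_sqr.
  destruct (Req_dec L 0) as [HL|HL].
  - assert (Hs : (s1 - s2) ^ 2 = 0 /\ (t1 - t2) ^ 2 = 0).
    { rewrite HL in HL2. pose proof (pow2_ge_0 (s1 - s2)). pose proof (pow2_ge_0 (t1 - t2)).
      lra. }
    destruct Hs as [Hs Ht]. rewrite <- Rsqr_pow2 in Hs, Ht. apply Rsqr_0_uniq in Hs, Ht.
    replace s2 with s1 by lra. replace t2 with t1 by lra.
    replace (s1 + l * (s1 - s1)) with s1 by ring.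
    replace (t1 + l * (t1 - t1)) with t1 by ring. exact H1.
  - pose proof (geodesic_segment_comp _ _ f Hf _ _ _ (plane_segment_geodesic _ _ _ _ HL))
      as Hg.
    pose proof (Hconv _ _ _ H1 H2 Hg (l * L)) as Hc. rewrite Hf in Hc. cbv beta zeta in Hc.
    fold L in Hc. replace (l * L / L) with l in Hc by (field; auto).
    apply Hc. split; nra.
Qed.

Definition flat {X1 X2} (l1 : R -> X1) (l2 : R -> X2) (p : R * R) : X1 * X2 :=
  (l1 (fst p), l2 (snd p)).

Lemma prod_dist_flat {X1 X2} (d1 : X1 -> X1 -> R) (d2 : X2 -> X2 -> R) l1 l2 :
  geodesic_line d1 l1 -> geodesic_line d2 l2 ->
  forall p q, prod_dist d1 d2 (flat l1 l2 p) (flat l1 l2 q) = eucl2 p q.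
Proof.
  intros H1 H2 p q. unfold prod_dist, flat, eucl2; cbn [fst snd].
  rewrite H1, H2, !pow2_abs. reflexivity.
Qed.

Lemma list_upper_bound {A} (f : A -> R) (L : list A) :
  exists M, forall k, In k L -> f k <= M.
Proof.
  induction L as [|a L [M HM]]; [exists 0; intros k []|].
  exists (Rmax (f a) M). intros k [<-|Hk]; [apply Rmax_l|].
  eapply Rle_trans; [apply HM, Hk | apply Rmax_r].
Qed.

Lemma le_sqrt_sum_sq a b : 0 <= a -> a <= sqrt (a ^ 2 + b ^ 2).
Proof. intros Ha. rewrite <- (sqrt_pow2 a Ha) at 1. apply sqrt_le_1_alt. nra. Qed.

Section ProductMetric.
Context {X1 X2 : Type} (d1 : X1 -> X1 -> R) (d2 : X2 -> X2 -> R).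
Hypotheses (d1_ge0 : forall a b, 0 <= d1 a b) (d2_ge0 : forall a b, 0 <= d2 a b).

Lemma prod_dist_ge_l p q : d1 (fst p) (fst q) <= prod_dist d1 d2 p q.
Proof. apply le_sqrt_sum_sq, d1_ge0. Qed.

Lemma prod_dist_ge_r p q : d2 (snd p) (snd q) <= prod_dist d1 d2 p q.
Proof. unfold prod_dist. rewrite Rplus_comm. apply le_sqrt_sum_sq, d2_ge0. Qed.

End ProductMetric.

Lemma diag_orbit_near {G X1 X2} (d1 : X1 -> X1 -> R) (d2 : X2 -> X2 -> R)
  (mul : G -> G -> G) (one : G) rho1 rho2 (C : X1 * X2 -> Prop) x1 x2 :
  is_metric d1 -> is_metric d2 ->
  isometric_action d1 mul one rho1 -> isometric_action d2 mul one rho2 ->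
  quotient_compact (prod_dist d1 d2) (diag_action rho1 rho2) C ->
  exists N, forall p1 p2, C (p1, p2) ->
    exists g, d1 (rho1 g x1) p1 < N /\ d2 (rho2 g x2) p2 < N.
Proof.
  intros (d1_ge0 & _ & _ & d1_tri) (d2_ge0 & _ & _ & d2_tri)
    (iso1 & _ & one1 & mul1) (iso2 & _ & one2 & mul2) HQ.
  set (U := fun (r : R) (p : X1 * X2) =>
              exists g, d1 (rho1 g x1) (fst p) < r /\ d2 (rho2 g x2) (snd p) < r).
  destruct (HQ R U) as [L HL].
  - intros r. exists (U r). split; [|tauto]. intros p (g & H1 & H2).
    exists (Rmin (r - d1 (rho1 g x1) (fst p)) (r - d2 (rho2 g x2) (snd p))).
    split; [apply Rmin_glb_lt; lra|].
    intros q Hq. exists g.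
    pose proof (Rmin_l (r - d1 (rho1 g x1) (fst p)) (r - d2 (rho2 g x2) (snd p))).
    pose proof (Rmin_r (r - d1 (rho1 g x1) (fst p)) (r - d2 (rho2 g x2) (snd p))).
    pose proof (prod_dist_ge_l d1 d2 d1_ge0 p q).
    pose proof (prod_dist_ge_r d1 d2 d2_ge0 p q).
    pose proof (d1_tri (rho1 g x1) (fst p) (fst q)).
    pose proof (d2_tri (rho2 g x2) (snd p) (snd q)). split; lra.
  - intros r h p _ (g & H1 & H2). exists (mul h g).
    unfold diag_action; cbn. rewrite mul1, iso1, mul2, iso2. auto.
  - intros p _. exists (d1 x1 (fst p) + d2 x2 (snd p) + 1), one.
    rewrite one1, one2. pose proof (d1_ge0 x1 (fst p)). pose proof (d2_ge0 x2 (snd p)).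
    split; lra.
  - destruct (list_upper_bound (fun r => r) L) as [M HM]. exists M.
    intros p1 p2 Cp. destruct (HL _ Cp) as (r & Hr & g & H1 & H2).
    exists g. specialize (HM r Hr). cbn in *. split; lra.
Qed.

Lemma bounded_fibers {G X1 X2} (d1 : X1 -> X1 -> R) (d2 : X2 -> X2 -> R)
  (mul : G -> G -> G) (one : G) (inv : G -> G) rho1 rho2 (Rel : X1 -> X2 -> Prop) x1 x2 N :
  is_metric d2 -> is_group mul one inv ->
  isometric_action d1 mul one rho1 -> isometric_action d2 mul one rho2 ->
  proper_space d1 -> properly_discontinuous d1 rho1 ->
  (forall p1 p2, Rel p1 p2 -> exists g, d1 (rho1 g x1) p1 < N /\ d2 (rho2 g x2) p2 < N) ->
  exists D, forall p1 p2 q2, Rel p1 p2 -> Rel p1 q2 -> d2 p2 q2 <= D.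
Proof.
  intros (_ & _ & d2_sym & d2_tri) (_ & _ & _ & invl & invr)
    (iso1 & _ & one1 & mul1) (iso2 & _ & one2 & mul2) Hproper PD HN.
  destruct (PD (fun y => d1 x1 y <= N) (Hproper x1 N)) as [L HL].
  destruct (list_upper_bound (fun k => d2 (rho2 k x2) x2) L) as [M HM].
  exists (2 * N + M). intros p1 p2 q2 Hp Hq.
  destruct (HN _ _ Hp) as (g & Hg1 & Hg2). destruct (HN _ _ Hq) as (h & Hh1 & Hh2).
  set (k := mul (inv h) g).
  (* k maps the point (inv g) p1 of the ball around x1 into that ball, so it lies in L. *)
  assert (Eg : rho1 g (rho1 (inv g) p1) = p1) by (rewrite <- mul1, invr, one1; auto).
  assert (Eh : rho1 h (rho1 (inv h) p1) = p1) by (rewrite <- mul1, invr, one1; auto).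
  assert (Hk : In k L).
  { apply HL. exists (rho1 (inv g) p1). split.
    - rewrite <- (iso1 g), Eg. lra.
    - unfold k. rewrite mul1, Eg, <- (iso1 h), Eh. lra. }
  assert (Hgh : d2 (rho2 g x2) (rho2 h x2) = d2 (rho2 k x2) x2).
  { unfold k. rewrite mul2, <- (iso2 (inv h) (rho2 g x2) (rho2 h x2)).
    rewrite <- (mul2 (inv h) h x2), invl, one2. reflexivity. }
  pose proof (HM k Hk). pose proof (d2_sym p2 (rho2 g x2)).
  pose proof (d2_tri p2 (rho2 g x2) q2). pose proof (d2_tri (rho2 g x2) (rho2 h x2) q2).
  lra.
Qed.

Theorem lemma3p1 (X1 X2 : Type) (d1 : X1 -> X1 -> R) (d2 : X2 -> X2 -> R)
  (G : Type) (mul : G -> G -> G) (one : G) (inv : G -> G)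
  (rho1 : G -> X1 -> X1) (rho2 : G -> X2 -> X2)
  (C : X1 * X2 -> Prop) (x1 : X1) (x2 : X2) (l1 : R -> X1) (l2 : R -> X2) :
  CAT0 d1 -> proper_space d1 -> CAT0 d2 -> proper_space d2 ->
  is_group mul one inv -> ~ finite_set (fun _ : G => True) ->
  isometric_action d1 mul one rho1 -> isometric_action d2 mul one rho2 ->
  convex_cocompact d1 rho1 -> convex_cocompact d2 rho2 ->
  properly_discontinuous (prod_dist d1 d2) (diag_action rho1 rho2) ->
  cocompact_convex_set (prod_dist d1 d2) (diag_action rho1 rho2) C ->
  C (x1, x2) ->
  geodesic_line d1 l1 -> (exists t, l1 t = x1) ->
  geodesic_line d2 l2 -> (exists t, l2 t = x2) ->
  let F := fun p : X1 * X2 => exists s t, p = (l1 s, l2 t) in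
  let CF := fun p => F p /\ C p in
  unbounded (prod_dist d1 d2) CF ->
  (exists r, geodesic_ray (prod_dist d1 d2) r /\ (forall t, 0 <= t -> F (r t)) /\
     hausdorff_finite (prod_dist d1 d2) CF (fun p => exists t, 0 <= t /\ p = r t))
  \/
  (exists l, geodesic_line (prod_dist d1 d2) l /\ (forall t, F (l t)) /\
     hausdorff_finite (prod_dist d1 d2) CF (fun p => exists t, p = l t)).
Proof.
  (* CAT(0) enters only through the metric axioms. *)
  intros [M1 _] P1 [M2 _] P2 Hgrp _ A1 A2 [PD1 _] [PD2 _] _ (_ & _ & Hconv & _ & HQ) _
    Hl1 _ Hl2 _ F CF Hunb.
  change (near_ray_or_line (prod_dist d1 d2) F CF).
  destruct (diag_orbit_near d1 d2 mul one rho1 rho2 C x1 x2 M1 M2 A1 A2 HQ) as [N HN].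
  destruct (bounded_fibers d1 d2 mul one inv rho1 rho2 (fun p1 p2 => C (p1, p2)) x1 x2 N
              M2 Hgrp A1 A2 P1 PD1 HN) as [D1 HD1].
  destruct (bounded_fibers d2 d1 mul one inv rho2 rho1 (fun p2 p1 => C (p1, p2)) x2 x1 N
              M1 Hgrp A2 A1 P2 PD2) as [D2 HD2].
  { intros p2 p1 Hp. destruct (HN p1 p2 Hp) as (g & H1 & H2). eauto. }
  pose proof (prod_dist_flat d1 d2 l1 l2 Hl1 Hl2) as Hflat.
  set (S := fun p => C (flat l1 l2 p)).
  apply (near_ray_or_line_image eucl2 _ (flat l1 l2) Hflat (fun _ => True) S).
  - intros [s t] _. exists s, t. reflexivity.
  - intros y. split.
    + intros ((s & t & ->) & Hy). exists (s, t). auto.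
    + intros ([s t] & Hp & ->). split; [exists s, t|]; auto.
  - apply (near_ray_or_line_of_convex2 S D1 D2).
    + exact (convex2_preimage _ _ C Hflat Hconv).
    + intros s t t' H H'. specialize (HD1 _ _ _ H H'). rewrite Hl2 in HD1; cbn in HD1.
      pose proof (Rle_abs (t - t')). lra.
    + intros s s' t H H'. specialize (HD2 _ _ _ H H'). rewrite Hl1 in HD2; cbn in HD2.
      pose proof (Rle_abs (s - s')). lra.
    + intros M.
      destruct (Hunb M) as (p & q & ((s & t & ->) & Hp) & ((s' & t' & ->) & Hq) & Hpq).
      exists (s, t), (s', t'). rewrite <- Hflat. auto.
Qed.
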